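(* For every positive integer $n$, \[ Z(n)\equiv(-1)^{\delta_{n}}\pmod{n}, \] where $\delta_n=1$ if $n$ is non-composite ($n=1$ or $n$ prime) and $\delta_n=0$ otherwise, and $Z(n)=\sum_{k=0}^{n-1}\frac{1+(-1)^{k}k!(n-k-1)!}{n}$. *)

From mathcomp Require Import all_boot all_order all_algebra.
Set Implicit Arguments. Unset Strict Implicit. Unset Printing Implicit Defensive.
Import Order.TTheory GRing.Theory Num.Theory.
Local Open Scope ring_scope.

Definition noncomposite (n : nat) : bool := (n == 1)%N || prime n.

Definition delta (n : nat) : nat := noncomposite n.

Definition Zsum (n : nat) : rat :=
  \sum_(k < n) (1 + (-1) ^+ k * (k`!)%:R * ((n - k - 1)`!)%:R) / n%:R.

From mathcomp Require Import all_boot all_order all_algebra.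
From mathcomp Require Import zify ring.
Import GRing.Theory Num.Theory.
Local Open Scope ring_scope.

(* Write Z(n) = 1 + S/n with S = sum_(k<n) (-1)^k k! (n-1-k)!.  Because
   (n+1) k! (n-1-k)! = k! (n-k)! + (k+1)! (n-1-k)!, the sum telescopes to
   (n+1) S = n! (1 - (-1)^n).  As n is coprime to n+1, S = q n, and then
   q = (n+1) q = (n-1)! (1 - (-1)^n) (mod n).  Hence Z(n) = 1 (mod n) for even
   n, and Z(n) = 1 + 2 (n-1)! (mod n) for odd n, which Wilson's theorem and
   n | (n-1)! for composite n <> 4 turn into (-1)^delta(n). *)

Lemma dvdn_fact_fact m n : (m <= n)%N -> (m`! %| n`!)%N.
Proof. by move=> le_mn; rewrite -(ffact_fact (leq_subr m n)) subKn // dvdn_mull. Qed.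

Lemma dvdn_mul_fact p q : (0 < p < q)%N -> (p * q %| q`!)%N.
Proof.
case: q => [|q] /andP[p_gt0 lt_pq]; first by [].
by rewrite factS mulnC dvdn_mul // dvdn_fact // p_gt0 -ltnS.
Qed.

Lemma dvdn_fact_pred_composite n :
  (1 < n)%N -> ~~ prime n -> n != 4 -> (n %| n.-1`!)%N.
Proof.
move=> n_gt1 n_composite n_neq4.
have p_prime : prime (pdiv n) by rewrite pdiv_prime.
set p := pdiv n in p_prime *; have p_gt1 := prime_gt1 p_prime.
have [b def_n] : exists b, n = (p * b)%N.
  by exists (n %/ p)%N; rewrite mulnC divnK // pdiv_dvd.
have le_pb : (p <= b)%N.
  have : (p ^ 2 <= n)%N.
    by rewrite leqNgt; apply: contra n_composite; apply: ltn_pdiv2_prime; lia.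
  by rewrite def_n expnS expn1 leq_pmul2l //; lia.
case: ltngtP le_pb => // [lt_pb | eq_pb] _; rewrite def_n.
  by apply: dvdn_trans (dvdn_mul_fact p b _) (dvdn_fact_fact b _ _); nia.
rewrite -eq_pb in def_n *.
have p_gt2 : (2 < p)%N by apply: contraNT n_neq4; rewrite -leqNgt; nia.
apply: (@dvdn_trans (p * p.*2)); first by rewrite -muln2 mulnA dvdn_mulr.
by apply: dvdn_trans (dvdn_mul_fact p p.*2 _) (dvdn_fact_fact p.*2 _ _); nia.
Qed.

Lemma fact_pred_mod_delta n : (0 < n)%N -> n != 4 ->
  ((n.-1)`!%:Z = - (delta n)%:Z %[mod n])%Z.
Proof.
move=> n_gt0 n_neq4; apply/eqP; rewrite eqz_mod_dvd opprK /delta /noncomposite.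
have [-> | n_neq1] := eqVneq n 1%N; first by rewrite dvd1z.
have n_gt1 : (1 < n)%N by lia.
have [n_prime | n_composite] /= := boolP (prime n).
  by rewrite -PoszD addn1 dvdzE /= -Wilson.
by rewrite addr0 dvdzE /= dvdn_fact_pred_composite.
Qed.

Definition alt_fact_sum (R : pzRingType) (n : nat) : R :=
  \sum_(k < n) (-1) ^+ k * k`!%:R * (n - k - 1)`!%:R.

Lemma alt_fact_sum_telescope (R : comPzRingType) n :
  n.+1%:R * alt_fact_sum R n = n`!%:R * (1 - (-1) ^+ n).
Proof.
pose u k : R := (-1) ^+ k * (k`! * (n - k)`!)%:R.
have step k : (k < n)%N ->
    n.+1%:R * ((-1) ^+ k * k`!%:R * (n - k - 1)`!%:R) = - (u k.+1 - u k).
  move=> lt_kn; have [d def_n] : exists d, n = (k + d).+1 by exists (n - k.+1)%N; lia.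
  rewrite /u; have -> : (n - k - 1 = d)%N by lia.
  have -> : (n - k = d.+1)%N by lia.
  have -> : (n - k.+1 = d)%N by lia.
  rewrite def_n !factS !natrM exprS; ring.
rewrite mulr_sumr (eq_bigr (fun k : 'I_n => - (u k.+1 - u k))) => [|k _]; last first.
  exact: step (ltn_ord k).
rewrite sumrN -(big_mkord xpredT (fun k => u k.+1 - u k)) telescope_sumr //.
by rewrite /u subn0 subnn fact0 muln1 mul1n expr0 mul1r; ring.
Qed.

Lemma dvdz_alt_fact_sum n : (n%:Z %| alt_fact_sum int n)%Z.
Proof.
case: n => [|m]; first by rewrite /alt_fact_sum big_ord0 dvdz0.
have coprime_n_nS : coprimez m.+1 m.+2 by rewrite coprimezE /= coprime_sym coprimeSn.
rewrite -(Gauss_dvdzr _ coprime_n_nS) -natz alt_fact_sum_telescope.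
by apply: dvdz_mulr; rewrite natz dvdzE /= factS dvdn_mulr.
Qed.

Lemma alt_fact_sum_quotient_mod n q : (0 < n)%N ->
  alt_fact_sum int n = q * n%:Z ->
  (q = (n.-1)`!%:Z * (1 - (-1) ^+ n) %[mod n])%Z.
Proof.
case: n => // m _ def_S.
have : m.+1%:Z * (m.+2%:Z * q) = m.+1%:Z * (m`!%:Z * (1 - (-1) ^+ m.+1)).
  rewrite mulrCA [_ * q]mulrC -def_S -natz alt_fact_sum_telescope.
  by rewrite mulrA -PoszM -factS natz.
by move/mulfI => <- //; rewrite -[m.+2]addn1 PoszD mulrDl mul1r mulrC modzMDl.
Qed.

Lemma Zsum_alt_fact_sum n : (0 < n)%N ->
  Zsum n = 1 + (alt_fact_sum int n)%:~R / n%:R.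
Proof.
move=> n_gt0; rewrite /Zsum -big_distrl /= big_split /= sumr_const card_ord.
rewrite mulrDl divff ?pnatr_eq0 -?lt0n // rmorph_sum.
congr (1 + _ / _); apply: eq_bigr => k _.
by rewrite !rmorphM rmorphXn rmorphN1 !rmorph_nat.
Qed.

Lemma fact_pred_sign_mod n : (0 < n)%N ->
  (1 + (n.-1)`!%:Z * (1 - (-1) ^+ n) = (-1) ^+ delta n %[mod n])%Z.
Proof.
move=> n_gt0; rewrite -[(-1) ^+ n]signr_odd.
have [n_odd | n_even] := boolP (odd n).
  have n_neq4 : n != 4 by apply: contraTneq n_odd => ->.
  move: (fact_pred_mod_delta n n_gt0 n_neq4); rewrite /delta.
  move: (noncomposite n) => b /eqP; rewrite eqz_mod_dvd => dvd_n.
  apply/eqP; rewrite eqz_mod_dvd.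
  have -> : 1 + (n.-1)`!%:Z * (1 - (-1) ^+ true) - (-1) ^+ b = ((n.-1)`!%:Z - - b%:Z) * 2.
    by case: b {dvd_n} => /=; ring.
  exact: dvdz_mulr.
have n_neq1 : n != 1%N by apply: contraNneq n_even => ->.
rewrite subrr mulr0 addr0 /delta /noncomposite (negbTE n_neq1) /=.
have [n_prime | //] := boolP (prime n).
by case: (even_prime n_prime) => [-> | n_odd] //; rewrite n_odd in n_even.
Qed.

Theorem mainTheorem8 (n : nat) (hn : (0 < n)%N) :
  exists z : int, Zsum n = z%:~R /\ (z = (-1) ^+ delta n %[mod n%:Z])%Z.
Proof.
have [q def_S] := dvdzP (dvdz_alt_fact_sum n).
exists (1 + q); split.
  rewrite Zsum_alt_fact_sum // def_S rmorphD rmorph1 rmorphM /= mulfK //.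
  by rewrite pnatr_eq0 -lt0n.
rewrite -modzDmr (alt_fact_sum_quotient_mod n q hn def_S) modzDmr.
exact: fact_pred_sign_mod.
Qed.
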